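(* Let $m\ge2$ be an integer and let $X$ be the conjugacy class of all transpositions in $S_m$, viewed as a quandle under conjugation $x^y=y^{-1}xy$. Then for every positive integer $n$ and every $s\in X^n$ whose entries generate $X$, the restriction to the stabilizer of $s$ in $B_n$ of the homomorphism $B_n\to S_n$ is surjective.
   Context: Entries generate $X$ if no proper subset of $X$ closed under $x^y$ contains them all. $B_n$ acts on $X^n$ from the right by $(\dots,x_i,x_{i+1},\dots)^{\sigma_i}=(\dots,x_{i+1},x_i^{x_{i+1}},\dots)$, and $B_n\to S_n$ sends $\sigma_i\mapsto(i\ i+1)$. *)

From mathcomp Require Import all_boot all_fingroup.
Set Implicit Arguments. Unset Strict Implicit. Unset Printing Implicit Defensive.
Local Open Scope group_scope.

(* Quandle X = conjugacy class of transpositions of S_m, operation x^y = y^-1 x y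
   (MathComp's conjg). *)
Definition is_transposition (m : nat) (x : 'S_m) : bool :=
  [exists i : 'I_m, exists j : 'I_m, (i != j) && (x == tperm i j)].

Definition transpositions (m : nat) : {set 'S_m} :=
  [set x : 'S_m | is_transposition x].

Definition generates_quandle (m : nat) (s : seq 'S_m) : Prop :=
  forall Y : {set 'S_m},
    Y \subset transpositions m ->
    (forall x y, x \in Y -> y \in Y -> x ^ y \in Y) ->
    (forall x, x \in s -> x \in Y) ->
    Y = transpositions m.

(* Braid words: a letter (k, true) is sigma_{k+1}, (k, false) its inverse
   (0-based position k, acting on positions k and k+1). *)
Definition braid_letter := (nat * bool)%type.

Definition word_in_Bn (n : nat) (w : seq braid_letter) : bool :=
  all (fun l : braid_letter => l.1.+1 < n) w.

Definition letter_act (m : nat) (l : braid_letter) (s : seq 'S_m) : seq 'S_m :=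
  let k := l.1 in
  let a := nth 1 s k in
  let b := nth 1 s k.+1 in
  if l.2 then set_nth 1 (set_nth 1 s k b) k.+1 (a ^ b)
  else set_nth 1 (set_nth 1 s k (b ^ a^-1)) k.+1 a.

Fixpoint braid_act (m : nat) (w : seq braid_letter) (s : seq 'S_m) : seq 'S_m :=
  match w with
  | [::] => s
  | l :: w' => braid_act w' (letter_act l s)
  end.

(* The transposition (i j) in S_n for i, j < n (identity in the degenerate case n = 0). *)
Definition tperm_nat (n : nat) (i j : nat) : 'S_n :=
  match n as n0 return 'S_n0 with
  | 0 => 1
  | n'.+1 => tperm (inord i : 'I_n'.+1) (inord j)
  end.

Fixpoint braid_perm (n : nat) (w : seq braid_letter) : 'S_n :=
  match w with
  | [::] => 1
  | l :: w' => tperm_nat n l.1 l.1.+1 * braid_perm n w'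
  end.

From mathcomp Require Import all_boot all_fingroup.
Set Implicit Arguments. Unset Strict Implicit. Unset Printing Implicit Defensive.
Local Open Scope group_scope.

Lemma braid_conjg (gT : finGroupType) (a b : gT) :
  a * b * a = b * a * b -> b ^ a = a ^ b^-1.
Proof.
move=> hab; rewrite !conjgE invgK; apply: (mulgI a); apply: (mulIg b).
by rewrite mulKVg -!mulgA mulVg mulg1 !mulgA hab.
Qed.

Lemma braid_conjg_fixl (gT : finGroupType) (a b : gT) :
  a * b * a = b * a * b -> (a ^ b) ^ a = b.
Proof. by move/esym/braid_conjg->; rewrite conjgKV. Qed.

Lemma braid_conjg_fixr (gT : finGroupType) (a b : gT) :
  a * b * a = b * a * b -> b ^ (a ^ b) = a.
Proof.
have bb : b ^ b = b by rewrite conjgE mulKg.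
by move/braid_conjg=> hab; rewrite -{1}bb -conjJg hab conjgKV.
Qed.

Lemma word_in_Bn_cat n (w1 w2 : seq braid_letter) :
  word_in_Bn n (w1 ++ w2) = word_in_Bn n w1 && word_in_Bn n w2.
Proof. exact: all_cat. Qed.

Lemma braid_act_cat m (w1 w2 : seq braid_letter) (s : seq 'S_m) :
  braid_act (w1 ++ w2) s = braid_act w2 (braid_act w1 s).
Proof. by elim: w1 s => //= l w IH s; rewrite IH. Qed.

Lemma braid_perm_cat n (w1 w2 : seq braid_letter) :
  braid_perm n (w1 ++ w2) = braid_perm n w1 * braid_perm n w2.
Proof. by elim: w1 => [|l w IH] /=; rewrite ?mul1g // IH mulgA. Qed.

Lemma letter_act_sigma m (s1 s2 : seq 'S_m) a b :
  letter_act (size s1, true) (s1 ++ a :: b :: s2) = s1 ++ b :: a ^ b :: s2.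
Proof.
rewrite /letter_act /= !nth_cat ltnn ltnNge leqnSn subnn subSnn /=.
by elim: s1 => //= x s1 ->.
Qed.

Lemma letter_act_sigmaV m (s1 s2 : seq 'S_m) a b :
  letter_act (size s1, false) (s1 ++ a :: b :: s2) = s1 ++ b ^ a^-1 :: a :: s2.
Proof.
rewrite /letter_act /= !nth_cat ltnn ltnNge leqnSn subnn subSnn /=.
by elim: s1 => //= x s1 ->.
Qed.

Lemma tperm_natE n (i j : 'I_n) : tperm_nat n i j = tperm i j.
Proof. by case: n i j => [[]//|n] i j /=; rewrite !inord_val. Qed.

Lemma tperm_natV n i j : (tperm_nat n i j)^-1 = tperm_nat n i j.
Proof. by case: n => [|n] /=; rewrite ?invg1 ?tpermV. Qed.

Lemma tperm_natJ n i j : i < j -> j.+1 < n ->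
  tperm_nat n i j ^ tperm_nat n j j.+1 = tperm_nat n i j.+1.
Proof.
case: n => // n lt_ij lt_jn /=.
have lt_in : i < n.+1 by rewrite (ltn_trans lt_ij) // ltnW.
have inord_neq a b : a < n.+1 -> b < n.+1 -> a != b -> (inord a : 'I_n.+1) != inord b.
  by move=> ? ?; apply: contra => /eqP/(congr1 val)/=; rewrite !inordK // => ->.
have lt_ij1 : i < j.+1 by rewrite ltnW.
by rewrite tpermJ tpermL tpermD // inord_neq ?gtn_eqF // ltnW.
Qed.

Definition stab_image {m} n (s : seq 'S_m) (p : 'S_n) : Prop :=
  exists w : seq braid_letter,
    [/\ word_in_Bn n w, braid_act w s = s & braid_perm n w = p].
Arguments stab_image {m} n s p.

Lemma stab_image1 m n (s : seq 'S_m) : stab_image n s 1.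
Proof. by exists [::]. Qed.

Lemma stab_imageM m n (s : seq 'S_m) p q :
  stab_image n s p -> stab_image n s q -> stab_image n s (p * q).
Proof.
move=> [w1 [Bw1 sw1 pw1]] [w2 [Bw2 sw2 pw2]]; exists (w1 ++ w2).
by rewrite word_in_Bn_cat braid_act_cat braid_perm_cat Bw1 Bw2 sw1 sw2 pw1 pw2.
Qed.

Lemma stab_image_tperm_nat m n (s : seq 'S_m) i j :
  size s = n -> i < j -> j < n ->
  nth 1 s i * nth 1 s j * nth 1 s i = nth 1 s j * nth 1 s i * nth 1 s j ->
  stab_image n s (tperm_nat n i j).
Proof.
move=> <-; elim: j s i => // j IH s i le_ij lt_js.
have [s1 [x [y [s2 [def_s size_s1]]]]] :
    exists s1 x y s2, s = s1 ++ x :: y :: s2 /\ size s1 = j.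
  exists (take j s), (nth 1 s j), (nth 1 s j.+1), (drop j.+2 s); split.
    by rewrite -{1}(cat_take_drop j s) (drop_nth 1 (ltnW lt_js)) (drop_nth 1 lt_js).
  by rewrite size_takel // ltnW // ltnW.
subst s j; rewrite size_cat /= in lt_js *.
have nth_y : nth 1 (s1 ++ x :: y :: s2) (size s1).+1 = y.
  by rewrite nth_cat ltnNge leqnSn subSnn.
rewrite nth_y; move: le_ij; rewrite ltnS leq_eqVlt => /predU1P[-> | lt_ij].
  rewrite nth_cat ltnn subnn /= => braid_xy.
  exists [:: (size s1, true); (size s1, true); (size s1, true)]; split.
  - by rewrite /word_in_Bn /= lt_js.
  - by rewrite /= !letter_act_sigma braid_conjg_fixr // braid_conjg_fixl.
  - by rewrite /= mulg1 -{1}tperm_natV mulKg.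
rewrite nth_cat lt_ij => braid_iy.
have := IH (s1 ++ y :: x ^ y :: s2) i lt_ij.
rewrite !nth_cat lt_ij ltnn subnn size_cat /= => /(_ (ltnW lt_js) braid_iy).
case=> w [Bw sw pw].
exists ((size s1, true) :: w ++ [:: (size s1, false)]); split.
- by move: Bw; rewrite /word_in_Bn /= all_cat lt_js => -> /=; rewrite lt_js.
- by rewrite /= letter_act_sigma braid_act_cat sw /= letter_act_sigmaV conjgK.
- by rewrite /= braid_perm_cat pw /= mulg1 -(tperm_natJ (i := i)) // conjgE tperm_natV.
Qed.

Lemma perm_connect_ind (T : finType) (e : rel T) (P : {perm T} -> Prop) :
  P 1 -> (forall p q, P p -> P q -> P (p * q)) ->
  (forall x y, e x y -> P (tperm x y)) ->
  (forall x y, connect e x y) -> forall p, P p.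
Proof.
move=> P1 PM Pe conn_e.
have P_tperm x y : P (tperm x y).
  suff P_path p u : P (tperm x u) -> path e u p -> P (tperm x (last u p)).
    by have /connectP[p e_p ->] := conn_e x y; apply: P_path e_p; rewrite tperm1.
  elim: p u => [//| v p IH] u Pxu /andP[e_uv e_p]; apply: IH e_p.
  have [<- | neq_ux] := eqVneq u x; first exact: Pe.
  have [-> | neq_vx] := eqVneq v x; first by rewrite tperm1.
  have -> : tperm x v = tperm u v * (tperm x u * tperm u v).
    by rewrite -{1}(tpermV u v) -conjgE tpermJ tpermL tpermD.
  by apply: PM (Pe _ _ e_uv) (PM _ _ Pxu (Pe _ _ e_uv)).
move=> p; have [ts -> _] := prod_tpermP p.
by elim: ts => [|t ts IH]; rewrite ?big_nil ?big_cons //; apply: PM.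
Qed.

Lemma is_transpositionP m (x : 'S_m) :
  reflect (exists a b, a != b /\ x = tperm a b) (is_transposition x).
Proof.
apply: (iffP existsP) => [[a /existsP[b /andP[nab /eqP->]]] | [a [b [nab ->]]]].
  by exists a, b.
by exists a; apply/existsP; exists b; rewrite nab eqxx.
Qed.

Lemma transposition_moves m (x : 'S_m) : is_transposition x -> exists z, x z != z.
Proof. by case/is_transpositionP=> a [b [nab ->]]; exists a; rewrite tpermL eq_sym. Qed.

Lemma transpositionsJ m (x y : 'S_m) :
  x \in transpositions m -> x ^ y \in transpositions m.
Proof.
rewrite !inE => /is_transpositionP[a [b [nab ->]]]; apply/is_transpositionP.
by exists (y a), (y b); rewrite tpermJ (inj_eq perm_inj).
Qed.

Lemma tperm_movedP (T : finType) (a b z : T) :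
  tperm a b z != z -> exists2 c, z != c & tperm a b = tperm z c.
Proof.
case: tpermP => [-> | -> | _ _]; last by rewrite eqxx.
  by exists b; rewrite // eq_sym.
by exists a; rewrite 1?eq_sym // tpermC.
Qed.

Lemma tperm_braid (T : finType) (a b d : T) : a != b -> a != d ->
  tperm a b * tperm a d * tperm a b = tperm a d * tperm a b * tperm a d.
Proof.
move=> nab nad; have [-> // | nbd] := eqVneq d b.
have tpermMJ x y (p : {perm T}) : tperm x y * p * tperm x y = p ^ tperm x y.
  by rewrite conjgE tpermV mulgA.
by rewrite !tpermMJ !tpermJ !tpermL !tpermD // 1?eq_sym // tpermC.
Qed.

Definition share_moved m (x y : 'S_m) : bool := [exists z, (x z != z) && (y z != z)].

Lemma share_moved_braid m (x y : 'S_m) :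
  is_transposition x -> is_transposition y -> share_moved x y ->
  x * y * x = y * x * y.
Proof.
case/is_transpositionP=> a [b [_ ->]]; case/is_transpositionP=> c [d [_ ->]].
case/existsP=> z /andP[/tperm_movedP[b' nzb' ->] /tperm_movedP[d' nzd' ->]].
exact: tperm_braid.
Qed.

Lemma tperm_astabs m (V : {set 'I_m}) a b :
  (tperm a b \in 'N(V | 'P)) = ((a \in V) == (b \in V)).
Proof.
apply/astabsP/eqP => [/(_ a) | eqV z]; rewrite /= apermE; first by rewrite tpermL => ->.
by case: tpermP => // ->.
Qed.

Lemma astabs_transpositions_full m (V : {set 'I_m}) a :
  transpositions m \subset 'N(V | 'P) -> a \in V -> V = setT.
Proof.
move=> /subsetP trV aV; apply/setP=> y; rewrite inE.
have [<- // | nay] := eqVneq a y.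
have /trV : tperm a y \in transpositions m.
  by rewrite inE; apply/is_transpositionP; exists a, y.
by rewrite tperm_astabs aV => /eqP<-.
Qed.

Section QuandleGenerators.

Variables (m : nat) (s : seq 'S_m).
Hypothesis s_tr : all (@is_transposition m) s.

Lemma transposition_nth (k : 'I_(size s)) : is_transposition (nth 1 s k).
Proof. exact: (all_nthP 1 s_tr). Qed.

Definition share_graph : rel 'I_(size s) :=
  fun i j => share_moved (nth 1 s i) (nth 1 s j).

Lemma stab_image_share (i j : 'I_(size s)) :
  share_graph i j -> stab_image (size s) s (tperm i j).
Proof.
move/share_moved_braid=> /(_ (transposition_nth i) (transposition_nth j)) braid_ij.
case: (ltngtP i j) => [lt_ij | lt_ji | /val_inj->]; last first.
- by rewrite tperm1; apply: stab_image1.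
- by rewrite tpermC -tperm_natE; apply: stab_image_tperm_nat.
- by rewrite -tperm_natE; apply: stab_image_tperm_nat.
Qed.

Hypothesis s_gen : generates_quandle s.

Lemma generates_quandle_astabs (V : {set 'I_m}) :
  {subset s <= 'N(V | 'P)} -> transpositions m \subset 'N(V | 'P).
Proof.
move=> sV; have <- : transpositions m :&: 'N(V | 'P) = transpositions m.
  apply: s_gen => [|x y /setIP[trx Vx] /setIP[_ Vy] | x sx].
  - exact: subsetIl.
  - by rewrite inE transpositionsJ // groupJ.
  - by rewrite inE sV // andbT inE (allP s_tr).
exact: subsetIr.
Qed.

Lemma share_graph_connected (i j : 'I_(size s)) : connect share_graph i j.
Proof.
pose C := [set k | connect share_graph i k].
pose V := [set z | [exists k in C, nth 1 s k z != z]].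
have moved_V (k : 'I_(size s)) z : nth 1 s k z != z -> (z \in V) = (k \in C).
  move=> kz; apply/idP/idP => [| kC]; last by rewrite inE; apply/exists_inP; exists k.
  rewrite !inE => /exists_inP[k' k'C k'z]; rewrite inE in k'C.
  by apply: connect_trans k'C (connect1 _); apply/existsP; exists z; rewrite k'z kz.
have s_astabs : {subset s <= 'N(V | 'P)}.
  move=> x /(nthP 1)[k lt_ks <-]; apply/astabsP => z; rewrite /= apermE.
  have [-> // | kz] := eqVneq (nth 1 s k z) z.
  have kkz : nth 1 s k (nth 1 s k z) != nth 1 s k z by rewrite (inj_eq perm_inj).
  by rewrite (moved_V (Ordinal lt_ks) _ kz) (moved_V (Ordinal lt_ks) _ kkz).
have [a ia] := transposition_moves (transposition_nth i).
have V_full : V = setT.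
  apply: (astabs_transpositions_full (generates_quandle_astabs s_astabs) (a := a)).
  by rewrite (moved_V i a ia) inE connect0.
have [b jb] := transposition_moves (transposition_nth j).
by have := moved_V j b jb; rewrite V_full !inE.
Qed.

End QuandleGenerators.

Theorem proposition4p40 (m : nat) (hm : 2 <= m) (n : nat) (hn : 0 < n)
  (s : seq 'S_m) (hsize : size s = n)
  (hX : all (@is_transposition m) s) (hgen : generates_quandle s) :
  forall pi : 'S_n,
    exists w : seq braid_letter,
      [/\ word_in_Bn n w, braid_act w s = s & braid_perm n w = pi].
Proof.
subst n; apply: (perm_connect_ind (stab_image1 _ s) (@stab_imageM _ _ s)).
- exact: stab_image_share.
- exact: share_graph_connected.
Qed.
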